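(* Let $T$ be a sequence of length $n$ over $\mathbb{A}$ and $I\subseteq\mathbb{A}$ an itemset with $|I|\ge 2$. Let $0<i<n$ and let $r_i^1(I),\dots,r_i^{|I|}(I)$ be the ordering of $I$ described in the context. If $T[i]=r_i^{|I|}(I)$, then for every integer $k\ge 0$ $$H_i[k]=H_{i-1}[k]+\mathbf{1}\big[k=\lambda(r_i^{|I|}(I),i-1)\big]-\mathbf{1}\big[k=\lambda(r_i^{|I|-1}(I),i-1)\big].$$ If $T[i]\neq r_i^{|I|}(I)$ (in particular if $T[i]\notin I$), then $H_i[k]=H_{i-1}[k]$ for all $k\ge 0$.
   Context: A sequence $T=(T[0],\dots,T[n-1])$ has entries in $\mathbb{A}$. For $e\in\mathbb{A}$ and $-1\le i\le n-1$, let $\lambda(e,i)=i-\max\{j\le i:T[j]=e\}$, where the maximum of the empty set is taken to be $-1$ (so $\lambda(e,i)=i+1$ if $e$ does not occur among $T[0],\dots,T[i]$). For $0<i<n$, the elements of $I$ are listed as $r_i^1(I),\dots,r_i^{|I|}(I)$ so that $\lambda(r_i^1(I),i-1)\le\lambda(r_i^2(I),i-1)\le\dots\le\lambda(r_i^{|I|}(I),i-1)$ (ties broken arbitrarily but fixed); thus $r_i^{|I|}(I)$ is an item of $I$ last seen furthest in the past before index $i$. For nonempty $A\subseteq I$ and an index $j$ with $T[j]\in A$, let $p_A(j)=\max\{j'<j:T[j']\in A\}$ (or $-1$ if no such $j'$); the $A$-gap closed at $j$ is $T[p_A(j)+1..j-1]$, of length $j-1-p_A(j)\ge 0$. For $-1\le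 i\le n-1$ and integers $k\ge0$, the partial gap histogram is $$H_i[k]=\sum_{\emptyset\ne A\subseteq I}(-1)^{|A|+1}\,\#\{\,j\le i:\ T[j]\in A,\ j-1-p_A(j)=k\,\}.$$ $\mathbf{1}[\cdot]$ denotes the indicator (1 if the condition holds, 0 otherwise). *)

From HB Require Import structures.
From mathcomp Require Import all_boot all_order all_algebra.
From mathcomp Require Import finmap.
Set Implicit Arguments. Unset Strict Implicit. Unset Printing Implicit Defensive.
Import GRing.Theory Num.Theory.
Local Open Scope fset_scope.

(* The sequence T of length n is represented by a function T : nat -> A;
   only the values T 0, ..., T (n-1) are ever used. *)

(* lastp1 T e i = 1 + max{ j <= i : T j = e }, or 0 if no such j
   (i.e. the max with the convention max(empty) = -1, shifted by one). *)
Definition lastp1 (A : eqType) (T : nat -> A) (e : A) (i : nat) : nat :=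
  \max_(j < i.+1 | T j == e) j.+1.

(* lambda(e, i) = i - max{j <= i : T j = e}  (with max empty = -1), for i >= 0. *)
Definition lam (A : eqType) (T : nat -> A) (e : A) (i : nat) : nat :=
  i.+1 - lastp1 T e i.

(* length of the B-gap closed at j:  j - 1 - p_B(j), where
   p_B(j) = max{ j' < j : T j' \in B } (or -1). *)
Definition gapl (A : choiceType) (T : nat -> A) (B : {fset A}) (j : nat) : nat :=
  j - \max_(j' < j | T j' \in B) j'.+1.

Definition H (A : choiceType) (T : nat -> A) (I : {fset A}) (i k : nat) : int :=
  (\sum_(B <- fpowerset I | B != fset0)
     (-1) ^+ (#|` B|).+1 *
     (#|[set j : 'I_i.+1 | (T j \in B) && (gapl T B j == k)]|)%:Z)%R.

From HB Require Import structures.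
From mathcomp Require Import all_boot all_order all_algebra.
From mathcomp Require Import finmap zify.
Set Implicit Arguments. Unset Strict Implicit. Unset Printing Implicit Defensive.
Import GRing.Theory Num.Theory.
Local Open Scope fset_scope.

(* Write j = i = m+1 and x = T j.  Passing from H_m to H_j only
   adds, for every nonempty B <= I, the contribution of position j: the signed
   indicator (-1)^(|B|+1) [x \in B /\ gap_B(j) = k].  The gap closed at j is
   j - last_B(j), where last_B(j) (one plus the last position before j whose
   letter lies in B) is the maximum of last_{e}(j) over e \in B.  Hence adding
   or removing an element y != x that is dominated by another element z of B
   (last_y(j) <= last_z(j)) does not change the gap but flips the sign: toggling
   y is a sign-reversing involution.
   - If x is not the item seen furthest in the past, toggling y = r^|I| kills
     every term, so H_j = H_m.
   - If x = r^|I| and y = r^(|I|-1) is seen strictly more recently than x, the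
     involution kills every term except B = {x} and B = {x, y}, which contribute
     [k = lambda(x)] and -[k = lambda(y)]; if lambda(y) = lambda(x) toggling y
     again kills everything and the two indicators cancel. *)

Lemma int_eq_opp0 (z : int) : z = (- z)%R -> z = 0%R.
Proof. lia. Qed.

Lemma sum_sign_reversing (X : eqType) (s : seq X) (t : X -> X) (f : X -> int) :
  uniq s -> involutive t -> {in s, forall B, t B \in s} ->
  {in s, forall B, f (t B) = - f B}%R -> (\sum_(B <- s) f B)%R = 0%R.
Proof.
move=> uniq_s invt st ft.
have perm_t : perm_eq s (map t s).
  apply: uniq_perm => //; first by rewrite map_inj_uniq //; exact: inv_inj.
  move=> B; apply/idP/mapP => [Bs | [C Cs ->]]; last exact: st.
  by exists (t B); [exact: st | rewrite invt].
apply: int_eq_opp0.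
by rewrite {1}(perm_big _ perm_t) big_map (eq_big_seq _ ft) sumrN.
Qed.

Lemma card_ord_recr n (P : pred nat) :
  #|[set j : 'I_n.+1 | P j]| = (#|[set j : 'I_n | P j]| + P n)%N.
Proof.
rewrite -!sum1_card !big_mkcond /= big_ord_recr /=.
rewrite [in RHS](big_mkcond (fun j : 'I_n => j \in [set j : 'I_n | P j])).
rewrite in_set /=; congr (_ + _)%N.
by apply: eq_bigr => j _; rewrite !in_set.
Qed.

Section SortedByKey.
Variables (X : eqType) (f : X -> nat) (x0 : X) (s : seq X).
Hypothesis sorted_s : sorted (fun a b => f a <= f b) s.

Lemma sorted_key_nth p q : p <= q < size s -> f (nth x0 s p) <= f (nth x0 s q).
Proof.
case/andP=> pq qs.
have key_trans : transitive (fun a b => f a <= f b) by move=> b a c; exact: leq_trans.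
apply: (sorted_leq_nth key_trans (fun a => leqnn (f a)) x0 sorted_s) => //.
by rewrite inE (leq_ltn_trans pq qs).
Qed.

Lemma sorted_key_last e : e \in s -> f e <= f (nth x0 s (size s - 1)).
Proof.
move=> es; rewrite -(nth_index x0 es); apply: sorted_key_nth.
by move: es; rewrite -index_mem; lia.
Qed.

Lemma sorted_key_penult e : uniq s -> e \in s -> e != nth x0 s (size s - 1) ->
  f e <= f (nth x0 s (size s - 2)).
Proof.
move=> uniq_s es; rewrite -(nth_index x0 es) nth_uniq ?index_mem //; last first.
  by move: es; rewrite -index_mem; lia.
by move=> ne; apply: sorted_key_nth; move: es ne; rewrite -index_mem; lia.
Qed.

End SortedByKey.

Section LastOccurrence.
Variables (A : choiceType) (T : nat -> A).
Implicit Types (B C I : {fset A}) (x y z : A).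

Definition last_in B j : nat := \max_(j' < j | T j' \in B) j'.+1.

Lemma last_in_le B j : last_in B j <= j.
Proof. by apply/bigmax_leqP => j' _; exact: ltn_ord. Qed.

Lemma last_inU y C j : last_in (y |` C) j = maxn (last_in [fset y] j) (last_in C j).
Proof.
rewrite /last_in big_mkcond [X in maxn X _]big_mkcond [X in maxn _ X]big_mkcond.
rewrite -big_split /=; apply: eq_bigr => j' _; rewrite !inE.
by case: (T j' == y); case: (T j' \in C); rewrite /= ?maxnn ?max0n ?maxn0.
Qed.

Lemma last_in1_le z C j : z \in C -> last_in [fset z] j <= last_in C j.
Proof. by move=> zC; rewrite -(fsetD1K zC) last_inU leq_maxl. Qed.

Lemma last_inU_dominated y z C j : z \in C ->
  last_in [fset y] j <= last_in [fset z] j -> last_in (y |` C) j = last_in C j.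
Proof.
move=> zC yz; rewrite last_inU; apply/maxn_idPr.
by rewrite (leq_trans yz) ?last_in1_le.
Qed.

Lemma lam_last_in e m : lam T e m = m.+1 - last_in [fset e] m.+1.
Proof. by congr (_ - _); apply: eq_bigl => j; rewrite inE. Qed.

Lemma lam_leqE y z m :
  (lam T z m <= lam T y m) = (last_in [fset y] m.+1 <= last_in [fset z] m.+1).
Proof.
rewrite !lam_last_in.
by have := last_in_le [fset y] m.+1; have := last_in_le [fset z] m.+1; lia.
Qed.

Definition toggle y B := if y \in B then B `\ y else y |` B.

Lemma toggleK y : involutive (toggle y).
Proof.
move=> B; rewrite /toggle; case yB: (y \in B).
  by rewrite !inE eqxx /= fsetD1K.
by rewrite fsetU11 fsetU1K // yB.
Qed.

Lemma toggle_sub y B I : y \in I -> B `<=` I -> toggle y B `<=` I.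
Proof.
move=> yI BI; rewrite /toggle; case: (y \in B).
  exact: fsubset_trans (fsubD1set _ _) BI.
by rewrite fsubUset fsub1set yI.
Qed.

(* The contribution of position j, whose letter is x, to the B-summand of H. *)
Definition gap_term x j k B : int :=
  ((-1) ^+ (#|` B|).+1 * ((x \in B) && (gapl T B j == k))%:Z)%R.

Lemma gap_term_toggle x y j k B : x != y ->
  (x \in B -> exists2 z, z \in B & (z != y) && (last_in [fset y] j <= last_in [fset z] j)) ->
  gap_term x j k (toggle y B) = (- gap_term x j k B)%R.
Proof.
move=> xy dom; rewrite /gap_term /gapl -/(last_in _ _) -/(last_in _ _) /toggle.
case yB: (y \in B).
  have xB' : (x \in B `\ y) = (x \in B) by rewrite !inE xy.
  case xB: (x \in B); last by rewrite xB' xB /= !mulr0 oppr0.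
  have [z zB /andP[zy yz]] := dom xB.
  have -> : last_in (B `\ y) j = last_in B j.
    by rewrite -{2}(fsetD1K yB) (last_inU_dominated _ yz) // !inE zy.
  by rewrite xB' xB (cardfsD1 y B) yB add1n [in RHS]exprS mulN1r mulNr opprK.
have xB' : (x \in y |` B) = (x \in B) by rewrite !inE (negbTE xy).
case xB: (x \in B); last by rewrite xB' xB /= !mulr0 oppr0.
have [z zB /andP[_ yz]] := dom xB.
by rewrite (last_inU_dominated _ yz) // xB' xB cardfsU1 yB add1n exprS mulN1r mulNr.
Qed.

Lemma H_succ I m k :
  H T I m.+1 k = (H T I m k + \sum_(B <- fpowerset I) gap_term (T m.+1) m.+1 k B)%R.
Proof.
have -> : (\sum_(B <- fpowerset I) gap_term (T m.+1) m.+1 k B =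
           \sum_(B <- fpowerset I | B != fset0) gap_term (T m.+1) m.+1 k B)%R.
  rewrite [RHS]big_mkcond; apply: eq_bigr => B _.
  by case: eqP => // ->; rewrite /gap_term inE mulr0.
rewrite /H -big_split; apply: eq_bigr => B _.
by rewrite (card_ord_recr m.+1 (fun j => (T j \in B) && (gapl T B j == k))) PoszD mulrDr.
Qed.

Lemma gap_term_sum_eq0 I x y j k : y \in I -> y != x ->
  (x \in I -> last_in [fset y] j <= last_in [fset x] j) ->
  (\sum_(B <- fpowerset I) gap_term x j k B)%R = 0%R.
Proof.
move=> yI yx yx_dom; apply: (sum_sign_reversing (t := toggle y)).
- exact: fset_uniq.
- exact: toggleK.
- by move=> B; rewrite !fpowersetE; exact: toggle_sub.
move=> B; rewrite fpowersetE => BI; apply: gap_term_toggle; first by rewrite eq_sym.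
by move=> xB; exists x; rewrite // eq_sym yx yx_dom ?(fsubsetP BI).
Qed.

Lemma third_element x y B : x \in B -> B != [fset x] -> B != y |` [fset x] ->
  exists2 z, z \in B & (z != x) && (z != y).
Proof.
move=> xB Bx Bxy; case: (eqVneq (B `\` [fset x; y]) fset0) => [|/fset0Pn[z]]; last first.
  by rewrite !inE negb_or => /andP[/andP[zx zy] zB]; exists z; rewrite ?zx.
move/eqP; rewrite fsetD_eq0 => /fsubsetP Bsub; exfalso.
have Bel e : e \in B -> (e == x) || (e == y) by move/Bsub; rewrite !inE.
case yB: (y \in B).
  apply: (negP Bxy); apply/eqP/fsetP => e; rewrite !inE.
  by apply/idP/idP => [/Bel|]; [rewrite orbC | case/orP => /eqP ->].
apply: (negP Bx); apply/eqP/fsetP => e; rewrite inE.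
apply/idP/idP => [eB | /eqP -> //].
by case/orP: (Bel e eB) => // /eqP ey; rewrite -ey eB in yB.
Qed.

Lemma gap_term_sum_two I x y j k : x \in I -> y \in I ->
  last_in [fset x] j < last_in [fset y] j ->
  (forall z, z \in I -> z != x -> last_in [fset y] j <= last_in [fset z] j) ->
  (\sum_(B <- fpowerset I) gap_term x j k B =
     (k == (j - last_in [fset x] j)%N)%:Z - (k == (j - last_in [fset y] j)%N)%:Z)%R.
Proof.
move=> xI yI xy dom; set a := [fset x]; set b := y |` a.
have yx : y != x by apply: contraTneq xy => ->; rewrite ltnn.
have yNa : y \notin a by rewrite inE.
have ba : b != a by apply: contraNneq yNa => <-; rewrite fsetU11.
have aI : a \in fpowerset I by rewrite fpowersetE fsub1set.
have bI : b \in fpowerset I by rewrite fpowersetE fsubUset !fsub1set yI xI.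
rewrite (bigD1_seq a) ?fset_uniq // -big_filter.
rewrite (bigD1_seq b) ?filter_uniq ?fset_uniq ?mem_filter ?ba // -big_filter.
rewrite (sum_sign_reversing (t := toggle y)).
- have term_a : gap_term x j k a = ((k == (j - last_in a j)%N)%:Z)%R.
    by rewrite /gap_term cardfs1 fset11 /= eq_sym expr2 mulN1r opprK mul1r.
  have term_b : gap_term x j k b = (- (k == (j - last_in [fset y] j)%N)%:Z)%R.
    have gap_b : gapl T b j = j - last_in [fset y] j.
      by rewrite /gapl -/(last_in _ _) last_inU; congr (_ - _); apply/maxn_idPl/ltnW.
    by rewrite /gap_term gap_b cardfsU1 yNa cardfs1 !inE eqxx orbT /= eq_sym mulN1r.
  by rewrite term_a term_b /= addr0.
- by do 2 apply: filter_uniq; exact: fset_uniq.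
- exact: toggleK.
- have toggle_a : toggle y a = b by rewrite /toggle (negbTE yNa).
  have toggle_b : toggle y b = a by rewrite /toggle fsetU11 fsetU1K.
  move=> B; rewrite !mem_filter !fpowersetE => /and3P[Bb Ba BI].
  rewrite toggle_sub // andbT; apply/andP; split.
  + by apply: contraNneq Ba => tB; rewrite -(toggleK y B) tB toggle_b.
  + by apply: contraNneq Bb => tB; rewrite -(toggleK y B) tB toggle_a.
move=> B; rewrite !mem_filter fpowersetE => /and3P[Bb Ba BI].
apply: gap_term_toggle; first by rewrite eq_sym.
move=> xB; have [z zB /andP[zx zy]] := third_element xB Ba Bb.
by exists z; rewrite // zy dom ?(fsubsetP BI).
Qed.

End LastOccurrence.

Theorem mainTheorem3 (A : choiceType) (n : nat) (T : nat -> A) (I : {fset A})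
    (i : nat) (r : seq A) :
  (2 <= #|` I|)%N -> (0 < i)%N -> (i < n)%N ->
  perm_eq r (enum_fset I) ->
  sorted (fun x y => (lam T x i.-1 <= lam T y i.-1)%N) r ->
  (T i = nth (T i) r (#|` I| - 1) ->
     forall k : nat,
       H T I i k = (H T I i.-1 k
                    + (k == lam T (nth (T i) r (#|` I| - 1)) i.-1)%:Z
                    - (k == lam T (nth (T i) r (#|` I| - 2)) i.-1)%:Z)%R) /\
  (T i <> nth (T i) r (#|` I| - 1) ->
     forall k : nat, H T I i k = H T I i.-1 k).
Proof.
case: i => [//|m] I2 _ _ perm_r sorted_r /=; set x := T m.+1.
have size_r : size r = #|` I| by rewrite (perm_size perm_r).
have uniq_r : uniq r by rewrite (perm_uniq perm_r) fset_uniq.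
have mem_r e : (e \in r) = (e \in I) by rewrite (perm_mem perm_r).
have nth_I p : p < #|` I| -> nth x r p \in I by move=> lt_p; rewrite -mem_r mem_nth ?size_r.
have top e : e \in I -> lam T e m <= lam T (nth x r (#|` I| - 1)) m.
  by rewrite -mem_r -size_r; exact: (sorted_key_last x sorted_r).
split=> [x_top | x_not_top] k; rewrite H_succ.
- set y := nth x r (#|` I| - 2).
  have yI : y \in I by apply: nth_I; lia.
  have yx : y != x by rewrite x_top nth_uniq ?size_r //; lia.
  have below e : e \in I -> e != x -> lam T e m <= lam T y m.
    rewrite -mem_r => er; rewrite {1}x_top /y -size_r.
    exact: (sorted_key_penult sorted_r uniq_r er).
  rewrite -x_top; have := top y yI; rewrite -x_top leq_eqVlt => /orP[/eqP eq_yx|lt_yx].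
  + rewrite (gap_term_sum_eq0 k yI yx) ?eq_yx ?addr0 ?addrK // => _.
    by rewrite -lam_leqE eq_yx.
  + have xI : x \in I by rewrite x_top nth_I //; lia.
    rewrite (gap_term_sum_two k xI yI) -?lam_last_in ?addrA //.
      by rewrite ltnNge -lam_leqE -ltnNge.
    by move=> z zI zx; rewrite -lam_leqE below.
- have yI : nth x r (#|` I| - 1) \in I by apply: nth_I; lia.
  have yx : nth x r (#|` I| - 1) != x by apply/eqP => e; apply: x_not_top.
  rewrite (gap_term_sum_eq0 k yI yx) ?addr0 // => xI.
  by rewrite -lam_leqE top.
Qed.
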